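(* Let $k > 1$ be an integer and let $p > 2k+1$ be a prime such that $p$ divides $\mathrm{num}\!\left(\frac{2^{2k}(2^{2k-1}-1)}{(2k)!}B_k\right)$. Then $p$ divides $t_k = a_k\, 2^{2k-2}(2^{2k-1}-1)\,\mathrm{num}\!\left(\frac{B_k}{4k}\right)$, where $a_k = 1$ if $k$ is even and $a_k = 2$ if $k$ is odd.
   Context: $B_k$ denotes the $k$-th Bernoulli number in the convention of Hirzebruch and Milnor–Kervaire ($B_1 = 1/6$, $B_2 = 1/30$, $B_3 = 1/42, \dots$; i.e. $B_k = |b_{2k}|$ where $t/(e^t-1)=\sum b_m t^m/m!$). For a rational number $a/b$, $\mathrm{num}(a/b)$ denotes the numerator of $a/b$ written in lowest terms. (The integer $t_k$ is the order of the group of homotopy $(4k-1)$-spheres bounding parallelizable manifolds.) *)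

From mathcomp Require Import all_boot all_order all_algebra.
Set Implicit Arguments. Unset Strict Implicit. Unset Printing Implicit Defensive.
Import Order.TTheory GRing.Theory Num.Theory.
Local Open Scope ring_scope.

(* Bernoulli numbers b_m with t/(e^t-1) = sum b_m t^m/m!, i.e.
   b_0 = 1 and sum_{j=0}^{m} C(m+1,j) b_j = 0 for m >= 1.
   bern_list n = [:: b_0; ...; b_n]. *)
Fixpoint bern_list (n : nat) : seq rat :=
  match n with
  | 0 => [:: 1]
  | n'.+1 =>
      let s := bern_list n' in
      rcons s (- ((n'.+2)%:R)^-1 *
               \sum_(j < n'.+1) ('C(n'.+2, j))%:R * nth 0 s j)
  end.

Definition bernoulli_b (m : nat) : rat := nth 0 (bern_list m) m.

(* Hirzebruch / Milnor-Kervaire convention: B_k = |b_{2k}| (B_1 = 1/6, ...). *)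
Definition BernB (k : nat) : rat := `| bernoulli_b k.*2 |.

Definition a_k (k : nat) : int := if odd k then 2 else 1.

Definition t_k (k : nat) : int :=
  a_k k * (2 ^+ (k.*2 - 2)) * (2 ^+ (k.*2 - 1) - 1) *
  numq (BernB k / (4 * k)%:R).

From mathcomp Require Import all_boot all_order all_algebra.
From mathcomp Require Import ring zify.
Set Implicit Arguments. Unset Strict Implicit. Unset Printing Implicit Defensive.
Import Order.TTheory GRing.Theory Num.Theory.
Local Open Scope ring_scope.

(* The two rationals in the statement differ by the factor
   [(2k)! / (k 2^(2k+2) (2^(2k-1) - 1))]; for p > 2k+1 either p divides
   [2^(2k-1) - 1], which is itself a factor of t_k, or the factor is a p-adic
   unit, and a p-adic unit factor cannot remove p from a numerator. *)

Lemma coprimez_numq_den (d : int) (x : rat) :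
  (d %| numq x)%Z -> coprimez d (denq x).
Proof. by rewrite dvdzE coprimezE => /coprime_dvdl; apply; apply: coprime_num_den. Qed.

Lemma numq_denq_cross (x y : rat) (u v : int) :
  x * u%:~R = y * v%:~R -> numq y * (denq x * v) = numq x * (denq y * u).
Proof.
move=> exy; apply: (@intr_inj rat); rewrite !rmorphM /= !numqE.
transitivity (y * v%:~R * ((denq x)%:~R * (denq y)%:~R)); first by ring.
by rewrite -exy; ring.
Qed.

Lemma dvdz_numq_scale (d u v : int) (x y : rat) :
  coprimez d v -> x * u%:~R = y * v%:~R ->
  (d %| numq x)%Z -> (d %| numq y)%Z.
Proof.
move=> dv exy dx; have dxden := coprimez_numq_den dx.
rewrite -(Gauss_dvdzl _ (_ : coprimez d (denq x * v))); last by rewrite coprimezMr dxden.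
by rewrite (numq_denq_cross exy) mulrC dvdz_mull.
Qed.

Lemma prime_coprimez (p : nat) (n : int) :
  prime p -> coprimez p n = ~~ (p%:Z %| n)%Z.
Proof. by move=> pp; rewrite coprimezE dvdzE prime_coprime. Qed.

Lemma prime_coprimez_lt (p n : nat) :
  prime p -> (0 < n < p)%N -> coprimez p n.
Proof. by move=> pp /andP[n0 np]; rewrite prime_coprimez // dvdzE gtnNdvd. Qed.

Theorem proposition3p13 (k p : nat) :
  (1 < k)%N -> prime p -> (k.*2.+1 < p)%N ->
  (p%:Z %| numq ((2 ^+ k.*2 * (2 ^+ (k.*2 - 1) - 1)) / (k.*2)`!%:R * BernB k))%Z ->
  (p%:Z %| t_k k)%Z.
Proof.
move=> k1 pp pk pX; rewrite /t_k.
set M : int := 2 ^+ (k.*2 - 1) - 1.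
have [pM | pNM] := boolP (p%:Z %| M)%Z; first by rewrite dvdz_mulr // dvdz_mull.
apply: dvdz_mull; apply: (@dvdz_numq_scale _ (k.*2)`!%:Z (k%:Z * 2 ^+ (k.*2 + 2) * M) _ _ _ _ pX).
- have [k_bounds two_bounds] : (0 < k < p)%N /\ (0 < 2 < p)%N by lia.
  by rewrite !coprimezMr prime_coprimez_lt // coprimezXr ?prime_coprimez_lt // prime_coprimez.
- have kf : (k.*2)`!%:R != 0 :> rat by rewrite pnatr_eq0 -lt0n fact_gt0.
  have kn0 : k%:R != 0 :> rat by rewrite pnatr_eq0 -lt0n (ltnW k1).
  rewrite /M !rmorphM /= !rmorphB /= !rmorphXn /= rmorph1.
  rewrite -[(k.*2)`!%:~R]/((k.*2)`!%:R) -[k%:~R]/(k%:R) -[2%:~R]/(2 : rat).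
  by rewrite natrM exprD; field; rewrite kf kn0.
Qed.
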